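(* Let $L_0$ be shared between frames $\mathcal{F}_1,\mathcal{F}_2$, let $C_s\subseteq\mathrm{LEFT}_0$, and let $\mathcal{B}_c\in\mathrm{lruns}_{C_{cut,0}}(\mathcal{F}_1)\cap\mathrm{lruns}_{C_{cut,0}}(\mathcal{F}_2)$. (1) $J^{1,C_s}_{C_{cut,0}}(\mathcal{B}_c)=J^{2,C_s}_{C_{cut,0}}(\mathcal{B}_c)$. (2) Assume $\mathrm{lruns}_{C_{cut,0}}(\mathcal{F}_2)\subseteq\mathrm{lruns}_{C_{cut,0}}(\mathcal{F}_1)$. Let $C_o\subseteq\mathrm{RIGHT}_2$ and $\mathcal{B}_o\in\mathrm{lruns}_{C_o}(\mathcal{F}_2)$. Then $$J^{2,C_s}_{C_o}(\mathcal{B}_o)=\bigcup_{\mathcal{B}'_c\in J^{2,C_{cut,0}}_{C_o}(\mathcal{B}_o)} J^{1,C_s}_{C_{cut,0}}(\mathcal{B}'_c).$$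
   Context: A frame consists of pairwise disjoint sets of locations $\mathcal{LO}$, channels $\mathcal{CH}$, data $\mathcal{D}$. Each channel $c$ either has both a sender $\mathrm{sender}(c)$ and a recipient $\mathrm{recipient}(c)$ (possibly equal), or neither; $\mathrm{chans}(\ell)$ is the set of channels of which $\ell$ is sender or recipient. Each location $\ell$ has a prefix-closed set $\mathrm{traces}(\ell)$ of finite or infinite sequences of labels $(c,v)$, $c\in\mathrm{chans}(\ell)$, $v\in\mathcal{D}$. Events are drawn from a common set $E$ with functions $\mathrm{chan}$ and $\mathrm{msg}$. A system of events $(B,\preceq)$ has $B\subseteq E$ and $\preceq$ a partial order with finitely many predecessors per event; it is an execution of frame $\mathcal{F}_i$ ($\in\mathrm{exec}(\mathcal{F}_i)$) iff for each location $\ell$ of $\mathcal{F}_i$ the events whose channel has $\ell$ as sender or recipient are linearly ordered and, as a sequence of labels $(\mathrm{chan}(e),\mathrm{msg}(e))$, lie in $\mathrm{traces}(\ell)$. $\mathcal{B}|_C$ keeps events with channel in $C$ and the restricted order. $\mathrm{lruns}_C(\mathcal{F}_i)=\{\mathcal{A}|_C:\mathcal{A}\in\mathrm{exec}(\mathcal{F}_i)\}$ and $J^{i,C'}_{C}(\mathcal{B})=\{\mathcal{A}|_{C'}:\mathcal{A}\in\mathrm{exec}(\mathcal{F}_i),\ \mathcal{A}|_C=\mathcal{B}\}$. A set $L_0$ of locations is shared between $\mathcal{F}_1$ and $\mathcal{F}_2$ (with locations $\mathcal{LO}_i$, channels $\mathcal{CH}_i$) iff $L_0\subseteq\mathcal{LO}_1\cap\mathcal{LO}_2$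 and each $\ell\in L_0$ has the same channel endpoints and the same trace set in both frames. Then $\mathrm{LEFT}_0=\{c\in\mathcal{CH}_1:$ both endpoints of $c$ are in $L_0\}$, $C_{cut,0}=\{c\in\mathcal{CH}_1:$ exactly one endpoint of $c$ is in $L_0\}$, and $\mathrm{RIGHT}_i=\{c\in\mathcal{CH}_i:$ no endpoint of $c$ is in $L_0\}$. *)

From Stdlib Require Import List.
Import ListNotations.
Set Implicit Arguments.

Section Frames.
(* Universes: locations, channels, data (pairwise disjoint: distinct types),
   and the common set of events E with chan / msg. *)
Variables (Loc Chan Data E : Type) (chan : E -> Chan) (msg : E -> Data).

Definition label := (Chan * Data)%type.

(* A finite or infinite sequence of labels: s k = None means "length <= k". *)
Definition lseq := nat -> option label.
Definition lseq_wf (s : lseq) : Prop := forall n, s n = None -> s (S n) = None.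
Definition lprefix (n : nat) (s : lseq) : lseq :=
  fun k => if Nat.ltb k n then s k else None.

Record frame := Frame {
  f_locs : Loc -> Prop;
  f_chans : Chan -> Prop;
  f_ends : Chan -> option (Loc * Loc);        (* Some (sender, recipient) or None *)
  f_traces : Loc -> lseq -> Prop
}.

Definition in_chans (F : frame) (l : Loc) (c : Chan) : Prop :=
  exists s r, f_ends F c = Some (s, r) /\ (s = l \/ r = l).

Definition wf_frame (F : frame) : Prop :=
  (forall c, ~ f_chans F c -> f_ends F c = None) /\
  (forall c s r, f_ends F c = Some (s, r) -> f_chans F c /\ f_locs F s /\ f_locs F r) /\
  (forall l t, f_traces F l t -> lseq_wf t) /\
  (forall l t k c v, f_traces F l t -> t k = Some (c, v) -> in_chans F l c) /\
  (forall l t n, f_traces F l t -> f_traces F l (lprefix n t)).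

Record sys := Sys { ev : E -> Prop; ord : E -> E -> Prop }.

Definition wf_sys (A : sys) : Prop :=
  (forall x y, ord A x y -> ev A x /\ ev A y) /\
  (forall x, ev A x -> ord A x x) /\
  (forall x y, ord A x y -> ord A y x -> x = y) /\
  (forall x y z, ord A x y -> ord A y z -> ord A x z) /\
  (forall e, ev A e -> exists l : list E, forall x, ord A x e -> In x l).

Definition has_rank (P : E -> Prop) (o : E -> E -> Prop) (e : E) (k : nat) : Prop :=
  exists l : list E, NoDup l /\ length l = k /\
    (forall x, In x l <-> (P x /\ o x e /\ x <> e)).

(* s is the sequence of labels of the (linearly ordered) events satisfying P *)
Definition represents (P : E -> Prop) (o : E -> E -> Prop) (s : lseq) : Prop :=
  forall k lab, s k = Some lab <->
    exists e, P e /\ has_rank P o e k /\ (chan e, msg e) = lab.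

Definition loc_events (F : frame) (A : sys) (l : Loc) (e : E) : Prop :=
  ev A e /\ in_chans F l (chan e).

Definition exec (F : frame) (A : sys) : Prop :=
  wf_sys A /\
  forall l, f_locs F l ->
    (forall x y, loc_events F A l x -> loc_events F A l y -> ord A x y \/ ord A y x) /\
    exists s, represents (loc_events F A l) (ord A) s /\ f_traces F l s.

Definition restrict (C : Chan -> Prop) (A : sys) : sys :=
  Sys (fun e => ev A e /\ C (chan e))
      (fun x y => ord A x y /\ C (chan x) /\ C (chan y)).

Definition lruns (F : frame) (C : Chan -> Prop) (B : sys) : Prop :=
  exists A, exec F A /\ restrict C A = B.

(* J^{F, C'}_C(B) as a set of systems *)
Definition J (F : frame) (C C' : Chan -> Prop) (B : sys) (B' : sys) : Prop :=
  exists A, exec F A /\ restrict C A = B /\ restrict C' A = B'.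

Definition shared (L0 : Loc -> Prop) (F1 F2 : frame) : Prop :=
  forall l, L0 l ->
    f_locs F1 l /\ f_locs F2 l /\
    (forall c, in_chans F1 l c \/ in_chans F2 l c -> f_ends F1 c = f_ends F2 c) /\
    (forall t, f_traces F1 l t <-> f_traces F2 l t).

Definition LEFT (L0 : Loc -> Prop) (F1 : frame) (c : Chan) : Prop :=
  f_chans F1 c /\ exists s r, f_ends F1 c = Some (s, r) /\ L0 s /\ L0 r.

Definition Ccut (L0 : Loc -> Prop) (F1 : frame) (c : Chan) : Prop :=
  f_chans F1 c /\ exists s r, f_ends F1 c = Some (s, r) /\
    ((L0 s /\ ~ L0 r) \/ (~ L0 s /\ L0 r)).

Definition RIGHT (L0 : Loc -> Prop) (F : frame) (c : Chan) : Prop :=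
  f_chans F c /\ (f_ends F c = None \/
    exists s r, f_ends F c = Some (s, r) /\ ~ L0 s /\ ~ L0 r).

End Frames.

(* Let P be the channels with an endpoint in L0 and Q the cut channels.  Given
   an execution A of one frame and an execution A' of the other that agree on Q,
   keep the events of A on P-channels and those of A' elsewhere, ordered by both
   orders together with their compositions through cut events.  As the two orders
   coincide on cut events this is again a partial order with finite downsets;
   locations in L0 see exactly their view in A and the others their view in A',
   so it is an execution of the second frame that looks like A on P and like A'
   off P and on Q.  Both parts follow by gluing in the appropriate direction. *)

From Stdlib Require Import List Classical FunctionalExtensionality PropExtensionality.
Import ListNotations.
Set Implicit Arguments.
Unset Strict Implicit.

Definition comp_rel {E : Type} (R L : E -> E -> Prop) (x y : E) : Prop :=
  exists c, R x c /\ L c y.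

Definition glue_rel {E : Type} (L R : E -> E -> Prop) (x y : E) : Prop :=
  L x y \/ R x y \/ comp_rel R L x y \/ comp_rel L R x y.

Lemma glue_rel_sym {E : Type} (L R : E -> E -> Prop) (x y : E) :
  glue_rel L R x y <-> glue_rel R L x y.
Proof. unfold glue_rel; tauto. Qed.

Record compatible_orders {E : Type} (a b : E -> Prop) (L R : E -> E -> Prop) : Prop := {
  co_dom_l : forall {x y}, L x y -> a x /\ a y;
  co_dom_r : forall {x y}, R x y -> b x /\ b y;
  co_refl_l : forall {x y}, L x y -> L x x /\ L y y;
  co_refl_r : forall {x y}, R x y -> R x x /\ R y y;
  co_trans_l : forall {x y z}, L x y -> L y z -> L x z;
  co_trans_r : forall {x y z}, R x y -> R y z -> R x z;
  co_antisym_l : forall {x y}, L x y -> L y x -> x = y;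
  co_antisym_r : forall {x y}, R x y -> R y x -> x = y;
  co_agree : forall x y, a x -> b x -> a y -> b y -> (L x y <-> R x y)
}.

Lemma compatible_orders_sym {E : Type} (a b : E -> Prop) (L R : E -> E -> Prop) :
  compatible_orders a b L R -> compatible_orders b a R L.
Proof.
  intros [? ? ? ? ? ? ? ? agree]; split; auto.
  intros; symmetry; auto.
Qed.

Section GlueRel.
Variables (E : Type) (a b : E -> Prop) (L R : E -> E -> Prop).
Hypothesis Hc : compatible_orders a b L R.

Lemma glue_rel_left x y : a x -> a y -> (glue_rel L R x y <-> L x y).
Proof.
  intros ax ay; split; [|now left].
  intros [h|[h|[[c [h1 h2]]|[c [h1 h2]]]]]; auto.
  - destruct (co_dom_r Hc h); now apply (co_agree Hc).
  - destruct (co_dom_r Hc h1), (co_dom_l Hc h2).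
    apply (co_trans_l Hc (y:=c)); auto; now apply (co_agree Hc).
  - destruct (co_dom_l Hc h1), (co_dom_r Hc h2).
    apply (co_trans_l Hc (y:=c)); auto; now apply (co_agree Hc).
Qed.

Lemma glue_rel_into_left x y : a y -> glue_rel L R x y -> L x y \/ comp_rel R L x y.
Proof.
  intros ay [h|[h|[h|[c [h1 h2]]]]]; auto.
  - right; exists y; split; auto.
    destruct (co_dom_r Hc h), (co_refl_r Hc h). now apply (co_agree Hc).
  - left; destruct (co_dom_l Hc h1), (co_dom_r Hc h2).
    apply (co_trans_l Hc (y:=c)); auto; now apply (co_agree Hc).
Qed.

Lemma glue_rel_from_left x y : a x -> glue_rel L R x y -> L x y \/ comp_rel L R x y.
Proof.
  intros ax [h|[h|[[c [h1 h2]]|h]]]; auto.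
  - right; exists x; split; auto.
    destruct (co_dom_r Hc h), (co_refl_r Hc h). now apply (co_agree Hc).
  - left; destruct (co_dom_r Hc h1), (co_dom_l Hc h2).
    apply (co_trans_l Hc (y:=c)); auto; now apply (co_agree Hc).
Qed.

Lemma glue_rel_trans_left x y z :
  a y -> glue_rel L R x y -> glue_rel L R y z -> glue_rel L R x z.
Proof.
  intros ay hxy hyz.
  destruct (glue_rel_into_left ay hxy) as [h1|[c [h1 h1']]];
    destruct (glue_rel_from_left ay hyz) as [h2|[c' [h2 h2']]]; unfold glue_rel, comp_rel.
  - left; exact (co_trans_l Hc h1 h2).
  - do 3 right; exists c'; split; [exact (co_trans_l Hc h1 h2)|exact h2'].
  - do 2 right; left; exists c; split; [exact h1|exact (co_trans_l Hc h1' h2)].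
  - right; left.
    destruct (co_dom_r Hc h1), (co_dom_l Hc h1'), (co_dom_l Hc h2), (co_dom_r Hc h2').
    (* [c] and [c'] lie in the overlap, where [L] and [R] agree *)
    assert (hcc : R c c') by (apply (co_agree Hc); auto; exact (co_trans_l Hc h1' h2)).
    exact (co_trans_r Hc h1 (co_trans_r Hc hcc h2')).
Qed.

(* The two paths between [x] and [y] meet the overlap in points [c] and [c'],
   and antisymmetry of [L] collapses the resulting cycle onto [x]. *)
Lemma glue_rel_cycle_left x y :
  a x -> ~ a y -> glue_rel L R x y -> glue_rel L R y x -> b x.
Proof.
  intros ax nay hxy hyx.
  destruct (glue_rel_from_left ax hxy) as [h|[c [h1 h2]]]; [now destruct (co_dom_l Hc h)|].
  destruct (glue_rel_into_left ax hyx) as [h|[c' [h3 h4]]]; [now destruct (co_dom_l Hc h)|].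
  destruct (co_dom_l Hc h1), (co_dom_r Hc h2), (co_dom_r Hc h3), (co_dom_l Hc h4).
  assert (c' = c).
  { apply (co_antisym_l Hc); [exact (co_trans_l Hc h4 h1)|].
    apply (co_agree Hc); auto; exact (co_trans_r Hc h2 h3). }
  subst c'.
  assert (x = c) by exact (co_antisym_l Hc h1 h4).
  now subst.
Qed.

End GlueRel.

Section GlueRelTheory.
Variables (E : Type) (a b : E -> Prop) (L R : E -> E -> Prop).
Hypothesis Hc : compatible_orders a b L R.
Hypothesis cover : forall x, a x \/ b x.

Lemma glue_rel_right x y : b x -> b y -> (glue_rel L R x y <-> R x y).
Proof.
  intros bx bY; rewrite glue_rel_sym.
  exact (glue_rel_left (compatible_orders_sym Hc) bx bY).
Qed.

Lemma glue_rel_trans x y z : glue_rel L R x y -> glue_rel L R y z -> glue_rel L R x z.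
Proof.
  destruct (classic (a y)) as [ay|nay]; [exact (glue_rel_trans_left Hc ay)|].
  assert (bY : b y) by (destruct (cover y); tauto).
  rewrite !(glue_rel_sym L R).
  exact (glue_rel_trans_left (compatible_orders_sym Hc) bY).
Qed.

Lemma glue_rel_antisym x y : glue_rel L R x y -> glue_rel L R y x -> x = y.
Proof.
  intros hxy hyx.
  destruct (classic (a x /\ a y)) as [[ax ay]|nab].
  - apply (co_antisym_l Hc); [apply (glue_rel_left Hc ax ay) | apply (glue_rel_left Hc ay ax)];
      assumption.
  - assert (hb : b x /\ b y).
    { destruct (classic (a x)) as [ax|nax]; destruct (classic (a y)) as [ay|nay].
      - tauto.
      - split; [exact (glue_rel_cycle_left Hc ax nay hxy hyx)|destruct (cover y); tauto].
      - split; [destruct (cover x); tauto|exact (glue_rel_cycle_left Hc ay nax hyx hxy)].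
      - destruct (cover x), (cover y); tauto. }
    destruct hb as [bx bY].
    apply (co_antisym_r Hc); [apply (glue_rel_right bx bY) | apply (glue_rel_right bY bx)];
      assumption.
Qed.

End GlueRelTheory.

Lemma sys_ext {E : Type} (A B : sys E) :
  (forall e, ev A e <-> ev B e) -> (forall x y, ord A x y <-> ord B x y) -> A = B.
Proof.
  destruct A as [evA ordA], B as [evB ordB]; simpl; intros hev hord.
  replace evB with evA
    by (apply functional_extensionality; intro; apply propositional_extensionality; auto).
  replace ordB with ordA
    by (do 2 (apply functional_extensionality; intro); apply propositional_extensionality; auto).
  reflexivity.
Qed.

Lemma restrict_eq_ev {Chan E : Type} (chan : E -> Chan) (C : Chan -> Prop) (A B : sys E) e :
  restrict chan C A = restrict chan C B -> C (chan e) -> (ev A e <-> ev B e).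
Proof.
  intros hAB he; pose proof (f_equal (fun S => ev S e) hAB) as h; simpl in h.
  split; intro hev.
  - assert (hA : ev A e /\ C (chan e)) by tauto; rewrite h in hA; tauto.
  - assert (hB : ev B e /\ C (chan e)) by tauto; rewrite <- h in hB; tauto.
Qed.

Lemma restrict_eq_ord {Chan E : Type} (chan : E -> Chan) (C : Chan -> Prop) (A B : sys E) x y :
  restrict chan C A = restrict chan C B -> C (chan x) -> C (chan y) ->
  (ord A x y <-> ord B x y).
Proof.
  intros hAB hx hy; pose proof (f_equal (fun S => ord S x y) hAB) as h; simpl in h.
  split; intro hxy.
  - assert (hA : ord A x y /\ C (chan x) /\ C (chan y)) by tauto; rewrite h in hA; tauto.
  - assert (hB : ord B x y /\ C (chan x) /\ C (chan y)) by tauto; rewrite <- h in hB; tauto.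
Qed.

Definition finite_preds {E : Type} (o : E -> E -> Prop) : Prop :=
  forall e, exists l : list E, forall x, o x e -> In x l.

Lemma finite_preds_mono {E : Type} (o o' : E -> E -> Prop) :
  (forall x y, o' x y -> o x y) -> finite_preds o -> finite_preds o'.
Proof. intros hsub ho e; destruct (ho e) as [l hl]; exists l; auto. Qed.

Lemma finite_preds_comp {E : Type} (R L : E -> E -> Prop) :
  finite_preds R -> finite_preds L -> finite_preds (comp_rel R L).
Proof.
  intros hR hL e; destruct (hL e) as [l hl].
  assert (hcollect : forall ls : list E, exists m, forall x c, In c ls -> R x c -> In x m).
  { induction ls as [|c ls [m hm]]; [exists []; intros x c []|].
    destruct (hR c) as [lc hc].
    exists (lc ++ m); intros x c' [<-|hin] hxc; apply in_or_app; eauto. }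
  destruct (hcollect l) as [m hm]; exists m; intros x [c [hxc hce]]; eauto.
Qed.

Lemma finite_preds_glue {E : Type} (L R : E -> E -> Prop) :
  finite_preds L -> finite_preds R -> finite_preds (glue_rel L R).
Proof.
  intros hL hR e.
  destruct (hL e) as [l1 h1], (hR e) as [l2 h2],
    (finite_preds_comp hR hL e) as [l3 h3], (finite_preds_comp hL hR e) as [l4 h4].
  exists (l1 ++ l2 ++ l3 ++ l4); intros x [h|[h|[h|h]]]; rewrite !in_app_iff; auto.
Qed.

Lemma wf_finite_preds {E : Type} (A : sys E) : wf_sys A -> finite_preds (ord A).
Proof.
  intros [hev [_ [_ [_ hpreds]]]] e.
  destruct (classic (ev A e)) as [he|he]; [exact (hpreds e he)|].
  exists []; intros x hx; destruct (hev x e hx); contradiction.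
Qed.

Definition right_chans {Chan : Type} (P Q : Chan -> Prop) (c : Chan) : Prop := ~ P c \/ Q c.

Definition glue {Chan E : Type} (chan : E -> Chan) (P Q : Chan -> Prop) (Al Ar : sys E) : sys E :=
  Sys (fun e => (ev Al e /\ P (chan e)) \/ (ev Ar e /\ ~ P (chan e)))
      (glue_rel (ord (restrict chan P Al)) (ord (restrict chan (right_chans P Q) Ar))).

Section GlueSys.
Context {Chan E : Type}.
Variables (chan : E -> Chan) (P Q : Chan -> Prop) (Al Ar : sys E).
Hypothesis cut_sub : forall c, Q c -> P c.
Hypotheses (wf_l : wf_sys Al) (wf_r : wf_sys Ar).
Hypothesis agree : restrict chan Q Al = restrict chan Q Ar.

Lemma restrict_compatible :
  compatible_orders (fun e => P (chan e)) (fun e => right_chans P Q (chan e))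
    (ord (restrict chan P Al)) (ord (restrict chan (right_chans P Q) Ar)).
Proof.
  destruct wf_l as [ev_l [refl_l [anti_l [trans_l _]]]],
    wf_r as [ev_r [refl_r [anti_r [trans_r _]]]].
  split; simpl.
  - tauto.
  - tauto.
  - intros x y [h [px py]]; destruct (ev_l x y h); auto.
  - intros x y [h [px py]]; destruct (ev_r x y h); auto.
  - intros x y z [h1 [px _]] [h2 [_ pz]]; eauto.
  - intros x y z [h1 [px _]] [h2 [_ pz]]; eauto.
  - intros x y [h1 _] [h2 _]; auto.
  - intros x y [h1 _] [h2 _]; auto.
  - intros x y px rx py ry.
    assert (qx : Q (chan x)) by (unfold right_chans in rx; tauto).
    assert (qy : Q (chan y)) by (unfold right_chans in ry; tauto).
    rewrite (restrict_eq_ord agree qx qy); tauto.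
Qed.

Lemma glue_ev_left e : P (chan e) -> (ev (glue chan P Q Al Ar) e <-> ev Al e).
Proof. simpl; tauto. Qed.

Lemma glue_ev_right e : right_chans P Q (chan e) -> (ev (glue chan P Q Al Ar) e <-> ev Ar e).
Proof.
  simpl; intros [np|qe]; [tauto|].
  rewrite <- (restrict_eq_ev agree qe); specialize (cut_sub qe); tauto.
Qed.

Lemma restrict_glue_left C :
  (forall c, C c -> P c) -> restrict chan C (glue chan P Q Al Ar) = restrict chan C Al.
Proof.
  intro hC; apply sys_ext; simpl.
  - intro e; split; intros [he hc]; split; auto; apply (glue_ev_left (hC _ hc)); auto.
  - intros x y; split; intros [hxy [cx cy]]; split; auto.
    + apply (glue_rel_left restrict_compatible (hC _ cx) (hC _ cy)) in hxy; apply hxy.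
    + apply (glue_rel_left restrict_compatible (hC _ cx) (hC _ cy)); simpl; auto.
Qed.

Lemma restrict_glue_right C :
  (forall c, C c -> right_chans P Q c) ->
  restrict chan C (glue chan P Q Al Ar) = restrict chan C Ar.
Proof.
  intro hC; apply sys_ext; simpl.
  - intro e; split; intros [he hc]; split; auto; apply (glue_ev_right (hC _ hc)); auto.
  - intros x y; split; intros [hxy [cx cy]]; split; auto.
    + apply (glue_rel_right restrict_compatible (hC _ cx) (hC _ cy)) in hxy; apply hxy.
    + apply (glue_rel_right restrict_compatible (hC _ cx) (hC _ cy)); simpl; auto.
Qed.

Lemma glue_cover e : P (chan e) \/ right_chans P Q (chan e).
Proof. unfold right_chans; destruct (classic (P (chan e))); tauto. Qed.

Lemma glue_wf : wf_sys (glue chan P Q Al Ar).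
Proof.
  pose proof (wf_finite_preds wf_l) as preds_l; pose proof (wf_finite_preds wf_r) as preds_r.
  destruct wf_l as [ev_l [refl_l _]], wf_r as [ev_r [refl_r _]].
  assert (field_l : forall x y, ord (restrict chan P Al) x y ->
            ev (glue chan P Q Al Ar) x /\ ev (glue chan P Q Al Ar) y).
  { intros x y [h [px py]]; destruct (ev_l x y h).
    rewrite (glue_ev_left px), (glue_ev_left py); auto. }
  assert (field_r : forall x y, ord (restrict chan (right_chans P Q) Ar) x y ->
            ev (glue chan P Q Al Ar) x /\ ev (glue chan P Q Al Ar) y).
  { intros x y [h [px py]]; destruct (ev_r x y h).
    rewrite (glue_ev_right px), (glue_ev_right py); auto. }
  split; [|split; [|split; [|split]]].
  - intros x y [h|[h|[[c [h1 h2]]|[c [h1 h2]]]]]; auto.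
    + split; [apply (field_r _ _ h1)|apply (field_l _ _ h2)].
    + split; [apply (field_l _ _ h1)|apply (field_r _ _ h2)].
  - intros x [[he px]|[he npx]]; [left|right; left]; simpl; unfold right_chans; auto.
  - exact (glue_rel_antisym restrict_compatible glue_cover).
  - exact (glue_rel_trans restrict_compatible glue_cover).
  - intros e _; apply finite_preds_glue.
    + apply (finite_preds_mono (o := ord Al)); [simpl; tauto|exact preds_l].
    + apply (finite_preds_mono (o := ord Ar)); [simpl; tauto|exact preds_r].
Qed.

End GlueSys.

Section Executions.
Context {Loc Chan Data E : Type}.
Variables (chan : E -> Chan) (msg : E -> Data).

Lemma has_rank_iff (S S' : E -> Prop) (o o' : E -> E -> Prop) e :
  (forall x, S x <-> S' x) -> (forall x y, S x -> S y -> (o x y <-> o' x y)) -> S e ->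
  forall k, has_rank S o e k <-> has_rank S' o' e k.
Proof.
  intros hS ho he k.
  assert (hpred : forall x, (S x /\ o x e /\ x <> e) <-> (S' x /\ o' x e /\ x <> e)).
  { intro x; split; intros [hx [hxe hne]].
    - split; [apply hS, hx|split; [apply (ho x e hx he), hxe|exact hne]].
    - assert (hx' : S x) by (apply hS, hx).
      split; [exact hx'|split; [apply (ho x e hx' he), hxe|exact hne]]. }
  unfold has_rank; split; intros [l [hnd [hlen hl]]]; exists l;
    (split; [exact hnd|split; [exact hlen|]]); intro x; split; intro hx.
  - apply hpred, hl, hx.
  - apply hl, hpred, hx.
  - apply hpred, hl, hx.
  - apply hl, hpred, hx.
Qed.

Lemma represents_iff (S S' : E -> Prop) (o o' : E -> E -> Prop) s :
  (forall x, S x <-> S' x) -> (forall x y, S x -> S y -> (o x y <-> o' x y)) ->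
  (represents chan msg S o s <-> represents chan msg S' o' s).
Proof.
  intros hS ho.
  assert (hev : forall k lab e,
            (S e /\ has_rank S o e k /\ (chan e, msg e) = lab) <->
            (S' e /\ has_rank S' o' e k /\ (chan e, msg e) = lab)).
  { intros k lab e; split; intros [he [hr hl]].
    - split; [apply hS, he|split; [apply (has_rank_iff hS ho he k), hr|exact hl]].
    - assert (he' : S e) by (apply hS, he).
      split; [exact he'|split; [apply (has_rank_iff hS ho he' k), hr|exact hl]]. }
  unfold represents; split; intros h k lab; rewrite h;
    split; intros [e he]; exists e; apply (hev k lab e), he.
Qed.

Definition local_ok (F : frame Loc Chan Data) (A : sys E) (l : Loc) : Prop :=
  (forall x y, loc_events chan F A l x -> loc_events chan F A l y -> ord A x y \/ ord A y x) /\
  exists s, represents chan msg (loc_events chan F A l) (ord A) s /\ f_traces F l s.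

Lemma local_ok_transfer (F F' : frame Loc Chan Data) (A A' : sys E) l :
  (forall c, in_chans F' l c <-> in_chans F l c) ->
  restrict chan (in_chans F l) A' = restrict chan (in_chans F l) A ->
  (forall t, f_traces F l t -> f_traces F' l t) ->
  local_ok F A l -> local_ok F' A' l.
Proof.
  intros hin hA htr [hlin [s [hrep hs]]].
  assert (hev : forall e, loc_events chan F' A' l e <-> loc_events chan F A l e).
  { intro e; unfold loc_events; rewrite hin.
    split; intros [he hc]; split; auto; apply (restrict_eq_ev hA hc); auto. }
  assert (hord : forall x y, loc_events chan F A l x -> loc_events chan F A l y ->
            (ord A' x y <-> ord A x y))
    by (intros x y [_ hx] [_ hy]; exact (restrict_eq_ord hA hx hy)).
  split.
  - intros x y hx hy; apply hev in hx; apply hev in hy; rewrite !hord by auto; auto.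
  - exists s; split; auto.
    apply (represents_iff (S := loc_events chan F A l) (o := ord A)); auto.
    + intro x; symmetry; apply hev.
    + intros x y hx hy; symmetry; auto.
Qed.

Lemma glue_exec (Fl Ft : frame Loc Chan Data) (P Q : Chan -> Prop) (Al Ar : sys E) :
  (forall c, Q c -> P c) ->
  exec chan msg Fl Al -> exec chan msg Ft Ar -> restrict chan Q Al = restrict chan Q Ar ->
  (forall l, f_locs Ft l ->
     (f_locs Fl l /\ (forall c, in_chans Ft l c <-> in_chans Fl l c) /\
      (forall c, in_chans Fl l c -> P c) /\ (forall t, f_traces Fl l t -> f_traces Ft l t)) \/
     (forall c, in_chans Ft l c -> right_chans P Q c)) ->
  exec chan msg Ft (glue chan P Q Al Ar).
Proof.
  intros hQP [wf_l loc_l] [wf_r loc_r] agree hloc.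
  split; [exact (glue_wf hQP wf_l wf_r agree)|].
  intros l hl; destruct (hloc l hl) as [[hl' [hin [hP htr]]]|hR].
  - apply (local_ok_transfer (F := Fl) (A := Al)); auto.
    + exact (restrict_glue_left wf_l wf_r agree hP).
    + exact (loc_l l hl').
  - apply (local_ok_transfer (F := Ft) (A := Ar)); auto.
    + tauto.
    + exact (restrict_glue_right hQP wf_l wf_r agree hR).
    + exact (loc_r l hl).
Qed.

End Executions.

Definition touches {Loc Chan Data : Type} (L0 : Loc -> Prop) (F : frame Loc Chan Data)
  (c : Chan) : Prop :=
  exists s r, f_ends F c = Some (s, r) /\ (L0 s \/ L0 r).

Lemma Ccut_touches {Loc Chan Data : Type} (L0 : Loc -> Prop) (F : frame Loc Chan Data) c :
  Ccut L0 F c -> touches L0 F c.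
Proof. intros [_ [s [r [h hsr]]]]; exists s, r; split; tauto. Qed.

Lemma LEFT_touches {Loc Chan Data : Type} (L0 : Loc -> Prop) (F : frame Loc Chan Data) c :
  LEFT L0 F c -> touches L0 F c.
Proof. intros [_ [s [r [h [hs _]]]]]; exists s, r; auto. Qed.

Lemma RIGHT_not_touches {Loc Chan Data : Type} (L0 : Loc -> Prop) (F : frame Loc Chan Data) c :
  RIGHT L0 F c -> ~ touches L0 F c.
Proof.
  intros [_ [hn|[s [r [h [ns nr]]]]]] [s' [r' [h' hsr]]]; rewrite h' in *; [discriminate|].
  injection h as <- <-; tauto.
Qed.

Lemma shared_sym {Loc Chan Data : Type} (L0 : Loc -> Prop) (F1 F2 : frame Loc Chan Data) :
  shared L0 F1 F2 -> shared L0 F2 F1.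
Proof.
  intros hsh l hl; destruct (hsh l hl) as [h1 [h2 [hends htr]]].
  repeat split; auto.
  - intros c hc; symmetry; apply hends; tauto.
  - apply htr.
  - apply htr.
Qed.

Section Shared.
Context {Loc Chan Data E : Type}.
Variables (chan : E -> Chan) (msg : E -> Data).
Variables (L0 : Loc -> Prop) (F1 F2 : frame Loc Chan Data).
Hypothesis hsh : shared L0 F1 F2.

Lemma in_chans_shared l c : L0 l -> (in_chans F2 l c <-> in_chans F1 l c).
Proof.
  intro hl; destruct (hsh hl) as [_ [_ [hends _]]]; unfold in_chans.
  split; intro h; [rewrite (hends c (or_intror h))|rewrite <- (hends c (or_introl h))]; exact h.
Qed.

Lemma ends_touches_shared c : touches L0 F1 c \/ touches L0 F2 c -> f_ends F1 c = f_ends F2 c.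
Proof.
  intros [[s [r [h hsr]]]|[s [r [h hsr]]]]; destruct hsr as [hl|hl];
    destruct (hsh hl) as [_ [_ [hends _]]]; apply hends;
    [left|left|right|right]; exists s, r; auto.
Qed.

Lemma touches_shared : touches L0 F2 = touches L0 F1.
Proof.
  apply functional_extensionality; intro c; apply propositional_extensionality.
  unfold touches; split; intro h;
    [rewrite (ends_touches_shared (or_intror h))|rewrite <- (ends_touches_shared (or_introl h))];
    exact h.
Qed.

Lemma Ccut_shared : wf_frame F1 -> wf_frame F2 -> Ccut L0 F2 = Ccut L0 F1.
Proof.
  intros [_ [wf1 _]] [_ [wf2 _]].
  apply functional_extensionality; intro c; apply propositional_extensionality.
  split; intro hc.
  - pose proof (ends_touches_shared (or_intror (Ccut_touches hc))) as hends.
    destruct hc as [_ [s [r [h hsr]]]]; rewrite <- hends in h.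
    split; [exact (proj1 (wf1 c s r h))|exists s, r; auto].
  - pose proof (ends_touches_shared (or_introl (Ccut_touches hc))) as hends.
    destruct hc as [_ [s [r [h hsr]]]]; rewrite hends in h.
    split; [exact (proj1 (wf2 c s r h))|exists s, r; auto].
Qed.

(* A channel of [F2] at a location outside [L0] that touches [L0] has its other end in [L0]. *)
Lemma outside_right_chans : wf_frame F1 ->
  forall l c, ~ L0 l -> in_chans F2 l c -> right_chans (touches L0 F1) (Ccut L0 F1) c.
Proof.
  intros [_ [wf1 _]] l c nl [s [r [h hl]]].
  destruct (classic (touches L0 F1 c)) as [ht|ht]; [right|left; exact ht].
  pose proof (ends_touches_shared (or_introl ht)) as hends.
  destruct ht as [s' [r' [h' hsr]]].
  split; [exact (proj1 (wf1 c s' r' h'))|exists s', r'; split; [exact h'|]].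
  rewrite hends, h in h'; injection h' as <- <-; destruct hl; subst; tauto.
Qed.

Lemma shared_glue (A1 A2 : sys E) : wf_frame F1 ->
  exec chan msg F1 A1 -> exec chan msg F2 A2 ->
  restrict chan (Ccut L0 F1) A1 = restrict chan (Ccut L0 F1) A2 ->
  exists G, exec chan msg F2 G /\
    (forall C, (forall c, C c -> touches L0 F1 c) -> restrict chan C G = restrict chan C A1) /\
    (forall C, (forall c, C c -> right_chans (touches L0 F1) (Ccut L0 F1) c) ->
       restrict chan C G = restrict chan C A2).
Proof.
  intros wf1 ex1 ex2 agree.
  pose proof (Ccut_touches (L0 := L0) (F := F1)) as hcut.
  exists (glue chan (touches L0 F1) (Ccut L0 F1) A1 A2); split; [|split].
  - apply (glue_exec (Fl := F1)); auto.
    intros l hl; destruct (classic (L0 l)) as [l0|nl0]; [left|right].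
    + destruct (hsh l0) as [hl1 [_ [_ htr]]].
      split; [exact hl1|split; [|split]].
      * intro c; apply in_chans_shared, l0.
      * intros c [s [r [h hsr]]]; exists s, r; split; [exact h|destruct hsr; subst; auto].
      * intro t; apply htr.
    + intro c; apply (outside_right_chans wf1 nl0).
  - intros C hC; exact (restrict_glue_left (proj1 ex1) (proj1 ex2) agree hC).
  - intros C hC; exact (restrict_glue_right hcut (proj1 ex1) (proj1 ex2) agree hC).
Qed.

Lemma J_transfer (Cl : Chan -> Prop) : wf_frame F1 ->
  (forall c, Cl c -> touches L0 F1 c) -> forall B X : sys E,
  J chan msg F1 (Ccut L0 F1) Cl B X -> lruns chan msg F2 (Ccut L0 F1) B ->
  J chan msg F2 (Ccut L0 F1) Cl B X.
Proof.
  intros wf1 hCl B X [A1 [ex1 [hB1 hX]]] [A2 [ex2 hB2]].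
  destruct (shared_glue wf1 ex1 ex2 (eq_trans hB1 (eq_sym hB2))) as [G [exG [hG1 hG2]]].
  exists G; split; [exact exG|split].
  - rewrite hG2; [exact hB2|intros c hc; right; exact hc].
  - rewrite hG1; [exact hX|exact hCl].
Qed.

End Shared.

Theorem lemma8 (Loc Chan Data E : Type) (chan : E -> Chan) (msg : E -> Data)
  (F1 F2 : frame Loc Chan Data) (L0 : Loc -> Prop)
  (wf1 : wf_frame F1) (wf2 : wf_frame F2) (hsh : shared L0 F1 F2)
  (Cs : Chan -> Prop) (hCs : forall c, Cs c -> LEFT L0 F1 c) :
  (forall Bc : sys E,
     lruns chan msg F1 (Ccut L0 F1) Bc -> lruns chan msg F2 (Ccut L0 F1) Bc ->
     forall X : sys E,
       J chan msg F1 (Ccut L0 F1) Cs Bc X <-> J chan msg F2 (Ccut L0 F1) Cs Bc X)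
  /\
  ((forall B : sys E, lruns chan msg F2 (Ccut L0 F1) B -> lruns chan msg F1 (Ccut L0 F1) B) ->
   forall (Co : Chan -> Prop) (Bo : sys E),
     (forall c, Co c -> RIGHT L0 F2 c) ->
     lruns chan msg F2 Co Bo ->
     forall X : sys E,
       J chan msg F2 Co Cs Bo X <->
       exists Bc' : sys E, J chan msg F2 Co (Ccut L0 F1) Bo Bc' /\
                           J chan msg F1 (Ccut L0 F1) Cs Bc' X).
Proof.
  assert (hCsT : forall c, Cs c -> touches L0 F1 c)
    by (intros c hc; exact (LEFT_touches (hCs c hc))).
  pose proof (J_transfer (chan := chan) (msg := msg) (shared_sym hsh) (Cl := Cs) wf2)
    as transfer21.
  rewrite (Ccut_shared hsh wf1 wf2), (touches_shared hsh) in transfer21.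
  specialize (transfer21 hCsT).
  split.
  - intros Bc h1 h2 X; split; intro hJ.
    + exact (J_transfer hsh wf1 hCsT hJ h2).
    + exact (transfer21 _ _ hJ h1).
  - intros hsub Co Bo hCo _ X; split.
    + intros [A [exA [hBo hX]]].
      assert (hBc : lruns chan msg F2 (Ccut L0 F1) (restrict chan (Ccut L0 F1) A))
        by (exists A; auto).
      exists (restrict chan (Ccut L0 F1) A); split; [exists A; auto|].
      apply transfer21; [exists A; auto|exact (hsub _ hBc)].
    + intros [Bc' [[A2 [ex2 [hBo hBc2]]] [A1 [ex1 [hBc1 hX]]]]].
      destruct (shared_glue hsh wf1 ex1 ex2 (eq_trans hBc1 (eq_sym hBc2)))
        as [G [exG [hG1 hG2]]].
      exists G; split; [exact exG|split].
      * rewrite hG2; [exact hBo|intros c hc; left].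
        rewrite <- (touches_shared hsh); exact (RIGHT_not_touches (hCo c hc)).
      * rewrite hG1; [exact hX|exact hCsT].
Qed.
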